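(* Let $n\ge 3$ and $s,t\in\{-1,1\}^{n}$ with $s\neq t$ and $\sharp_{n}(s)=\sharp_{n}(t)$. Assume $(s_1,s_2)=(1,-1)$ and $(t_1,t_2)=(-1,1)$. If \[ \sum_{k=1}^{n}s_{k}\sharp_{k}(s)>\sum_{k=1}^{n}t_{k}\sharp_{k}(t),\] then the curve $c_{s,t}$ meets $R=\{(x,y)\in(0,1)^2: x+y>1\}$, i.e. there is $(x,y)\in(0,1)^2$ with $x+y>1$ and \[ \sum_{k=1}^{n}\Big(s_{k}x^{\sharp_{k}(s)}y^{\tilde\sharp_{k}(s)}-t_{k}x^{\sharp_{k}(t)}y^{\tilde\sharp_{k}(t)}\Big)=0 .\]
   Context: For $r\in\{-1,1\}^{n}$ and $1\le k\le n$, $\sharp_{k}(r)$ is the number of entries of $(r_1,\dots,r_k)$ equal to $1$ and $\tilde\sharp_{k}(r)=k-\sharp_{k}(r)$. The curve $c_{s,t}$ is the zero set in $\mathbb{R}^2$ of $\sum_{k=1}^{n}(s_{k}x^{\sharp_{k}(s)}y^{\tilde\sharp_{k}(s)}-t_{k}x^{\sharp_{k}(t)}y^{\tilde\sharp_{k}(t)})$. *)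

From mathcomp Require Import all_boot all_order all_algebra.
From mathcomp Require Import reals.
Set Implicit Arguments. Unset Strict Implicit. Unset Printing Implicit Defensive.
Import Order.TTheory GRing.Theory Num.Theory.
Local Open Scope ring_scope.

(* Sign vectors r in {-1,1}^n are represented as r : 'I_n -> int, with the
   hypothesis that every entry is -1 or 1.  Index i : 'I_n corresponds to the
   paper's index i+1. *)
Definition pm1 (n : nat) (r : 'I_n -> int) : Prop :=
  forall i, r i = 1 \/ r i = -1.

Definition sharp (n : nat) (r : 'I_n -> int) (k : nat) : nat :=
  #|[set i : 'I_n | (i < k)%N && (r i == 1)]|.

Definition tsharp (n : nat) (r : 'I_n -> int) (k : nat) : nat :=
  (k - sharp r k)%N.

Definition cst (R : ringType) (n : nat) (s t : 'I_n -> int) (x y : R) : R :=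
  \sum_(i < n)
    ((s i)%:~R * x ^+ sharp s i.+1 * y ^+ tsharp s i.+1
     - (t i)%:~R * x ^+ sharp t i.+1 * y ^+ tsharp t i.+1).

From mathcomp Require Import all_boot all_order all_algebra.
From mathcomp Require Import reals polyrcf.
From mathcomp Require Import ring lra.
Import Order.TTheory GRing.Theory Num.Theory Num.Def.
Local Open Scope ring_scope.

(* Write f for the polynomial of c_{s,t}.  Since #_n(s) = #_n(t) we have
   f(1,1) = 0, and along the parabola u |-> (1 - u, 1 - u^2) the derivative of
   f at u = 0 is sum_k t_k #_k(t) - sum_k s_k #_k(s) < 0, so f < 0 at points of
   R close to (1,1).  Since (s_1,s_2) = (1,-1) and t_1 = -1, all terms of f
   vanish at (1,0) except s_1 x = 1, so f > 0 at points of R close to (1,0)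
   (on the ray u |-> (1 - u, 2u)).  As R is convex, the intermediate value
   theorem on the segment joining these two points gives a zero of f in R. *)

Definition moment {n} (r : 'I_n -> int) : int :=
  \sum_(i < n) r i * (sharp r i.+1)%:Z.

Definition in_region {R : numDomainType} (x y : R) : Prop :=
  [/\ 0 < x < 1, 0 < y < 1 & 1 < x + y].

Section Counting.
Context {n : nat}.

Lemma sharp_le (r : 'I_n -> int) {k} : (k <= n)%N -> (sharp r k <= k)%N.
Proof.
move=> le_kn; rewrite /sharp.
have -> : [set i : 'I_n | (i < k)%N && (r i == 1)] =
          widen_ord le_kn @: [set j : 'I_k | r (widen_ord le_kn j) == 1].
  apply/setP => i; rewrite !inE; apply/idP/imsetP.
    case/andP=> lt_ik ri1; exists (Ordinal lt_ik); last exact: val_inj.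
    by rewrite inE (_ : widen_ord _ _ = i) //; apply: val_inj.
  by case=> j; rewrite inE => rj1 ->; rewrite /= ltn_ord.
by rewrite (leq_trans (leq_imset_card _ _)) // (leq_trans (max_card _)) ?card_ord.
Qed.

Lemma sharp_lt (r : 'I_n -> int) {k} {j : 'I_n} :
  (k <= n)%N -> (j < k)%N -> r j != 1 -> (sharp r k < k)%N.
Proof.
move=> le_kn lt_jk rj1; pose r' i := if i == j then 1 else r i.
apply: leq_trans (sharp_le r' le_kn) => {le_kn}.
rewrite /sharp; apply: proper_card; apply/properP; split.
  by apply/subsetP => i; rewrite !inE /r' => /andP[-> ri1]; case: (i == j).
by exists j; rewrite !inE /r' ?eqxx ?lt_jk // (negbTE rj1) andbF.
Qed.

Lemma tsharp_gt0 (r : 'I_n -> int) {k} {j : 'I_n} :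
  (k <= n)%N -> (j < k)%N -> r j != 1 -> (0 < tsharp r k)%N.
Proof. by move=> le_kn lt_jk rj1; rewrite subn_gt0 (sharp_lt r le_kn lt_jk rj1). Qed.

Lemma sharp1 (r : 'I_n -> int) {i0 : 'I_n} :
  nat_of_ord i0 = 0%N -> r i0 = 1 -> sharp r 1 = 1%N.
Proof.
move=> i0E ri0; apply/anti_leq; rewrite sharp_le ?(leq_ltn_trans _ (ltn_ord i0)) //.
by apply/card_gt0P; exists i0; rewrite inE i0E ri0 eqxx.
Qed.

Lemma sum_pm1 (r : 'I_n -> int) :
  pm1 r -> \sum_(i < n) r i = 2 * (sharp r n)%:Z - n%:Z.
Proof.
move=> r_pm1; transitivity (\sum_(i < n) (2 * (r i == 1 : nat)%:Z - 1)).
  by apply: eq_bigr => i _; case: (r_pm1 i) => ->.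
rewrite sumrB -mulr_sumr sumr_const card_ord -(big_morph Posz PoszD (erefl 0%:Z)).
rewrite /sharp -sum1_card; congr (_ * Posz _ - _); last exact: natz.
by rewrite [RHS]big_mkcond /=; apply: eq_bigr => i _; rewrite inE ltn_ord.
Qed.

End Counting.

Lemma cst_horner (R : comNzRingType) n (s t : 'I_n -> int) (p q : {poly R}) u :
  (cst s t p q).[u] = cst s t p.[u] q.[u].
Proof.
by rewrite /cst horner_sum; apply: eq_bigr => i _; rewrite !hornerE !horner_int.
Qed.

Lemma cst11 (R : nzRingType) n (s t : 'I_n -> int) : pm1 s -> pm1 t ->
  sharp s n = sharp t n -> cst s t (1 : R) 1 = 0.
Proof.
move=> s_pm1 t_pm1 st_n; rewrite /cst sumrB.
under eq_bigr do rewrite !expr1n !mulr1.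
under [X in _ - X]eq_bigr do rewrite !expr1n !mulr1.
by rewrite -!rmorph_sum /= sum_pm1 // sum_pm1 // st_n subrr.
Qed.

(* Only the first term survives: for i >= 1, s has the entry -1 at index 1 and
   t has the entry -1 at index 0, so both powers of y have positive exponent. *)
Lemma cst10 {R : nzRingType} {n} {s t : 'I_n -> int} {i0 i1 : 'I_n} :
  nat_of_ord i0 = 0%N -> nat_of_ord i1 = 1%N ->
  s i0 = 1 -> s i1 = -1 -> t i0 = -1 -> cst s t (1 : R) 0 = 1.
Proof.
move=> i0E i1E si0 si1 ti0.
have ti0N1 : t i0 != 1 by rewrite ti0.
have si1N1 : s i1 != 1 by rewrite si1.
have n_gt0 : (0 < n)%N := leq_ltn_trans (leq0n i0) (ltn_ord i0).
rewrite /cst (bigD1 i0) //= big1 ?addr0 => [|i ne_ii0].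
  rewrite i0E {1}/tsharp (sharp1 s i0E si0) subnn expr0 expr0n eqn0Ngt.
  by rewrite (tsharp_gt0 t n_gt0 _ ti0N1) ?i0E // si0 !expr1n !mulr1 mulr0 subr0.
have lt_i1 : (i1 < i.+1)%N.
  by rewrite i1E ltnS lt0n -i0E; apply: contra ne_ii0 => /eqP/val_inj ->.
rewrite !expr0n !eqn0Ngt (tsharp_gt0 s (ltn_ord i) lt_i1 si1N1).
by rewrite (tsharp_gt0 t (ltn_ord i) _ ti0N1) ?i0E // !mulr0 subrr.
Qed.

Section PolyNearZero.
Context {R : rcfType}.

Lemma sgp_right_witness (p : {poly R}) {c} : 0 < c -> p != 0 ->
  exists2 u, 0 < u <= c & sgr p.[u] = sgp_right p 0.
Proof.
move=> c_gt0 p_neq0; have [u u_nbh] := neighpr_wit c_gt0 p_neq0.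
exists u; last exact: sgr_neighpr u_nbh.
move: u_nbh (next_root_in p 0 c); rewrite /neighpr !in_itv /=.
move=> /andP[-> lt_u_root] /andP[_ root_le].
by rewrite ltW // (lt_le_trans lt_u_root) // (le_trans root_le) // ge_max lexx ltW.
Qed.

Lemma poly_gt0_right (p : {poly R}) {c} : 0 < c -> 0 < p.[0] ->
  exists2 u, 0 < u <= c & 0 < p.[u].
Proof.
move=> c_gt0 p0_gt0; have p0_neq0 := gt_eqF p0_gt0.
have p_neq0 : p != 0 by apply: contraFN p0_neq0 => /eqP->; rewrite horner0.
have [u u_c sg_u] := sgp_right_witness p c_gt0 p_neq0; exists u => //.
by rewrite -sgr_cp0 sg_u sgp_rightNroot ?rootE ?p0_neq0 // gtr0_sg.
Qed.

Lemma poly_lt0_right (p : {poly R}) {c} : 0 < c -> p.[0] = 0 -> p`_1 < 0 ->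
  exists2 u, 0 < u <= c & p.[u] < 0.
Proof.
move=> c_gt0 p0 p1_lt0; have p1_neq0 := lt_eqF p1_lt0.
have p_neq0 : p != 0 by apply: contraFN p1_neq0 => /eqP->; rewrite coef0.
have [u u_c sg_u] := sgp_right_witness p c_gt0 p_neq0; exists u => //.
have dp0 : p^`().[0] = p`_1 by rewrite horner_coef0 coef_deriv.
rewrite -sgr_cp0 sg_u sgp_right_deriv ?rootE ?p0 //.
by rewrite sgp_rightNroot ?rootE ?dp0 ?p1_neq0 // ltr0_sg.
Qed.

End PolyNearZero.

Lemma coef1_exp {R : comNzRingType} (p : {poly R}) a : p`_0 = 1 ->
  (p ^+ a)`_0 = 1 /\ (p ^+ a)`_1 = a%:R * p`_1.
Proof.
move=> p0; elim: a => [|a [pa0 pa1]]; first by rewrite expr0 !coefC mul0r.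
rewrite exprS coef0M coefM !big_ord_recl big_ord0 /= pa0 pa1 p0.
by split; [rewrite mulr1 | rewrite mulrSr; ring].
Qed.

Lemma coef1_parabola_monomial (R : comNzRingType) a b :
  (((1 - 'X) ^+ a * (1 - 'X ^+ 2) ^+ b : {poly R}))`_1 = - a%:R.
Proof.
have [|xa0 xa1] := coef1_exp (1 - 'X : {poly R}) a.
  by rewrite coefB coefC coefX subr0.
have [|yb0 yb1] := coef1_exp (1 - 'X ^+ 2 : {poly R}) b.
  by rewrite coefB coefC coefXn subr0.
rewrite coefM !big_ord_recl big_ord0 /= xa0 xa1 yb0 yb1 !coefB !coefC coefXn coefX /=.
ring.
Qed.

Lemma coef1_cst_parabola (R : comNzRingType) n (s t : 'I_n -> int) :
  (cst s t (1 - 'X) (1 - 'X ^+ 2) : {poly R})`_1 = - (moment s - moment t)%:~R.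
Proof.
rewrite /cst /moment coef_sum rmorphB /= !rmorph_sum /= opprB -sumrB.
apply: eq_bigr => i _; rewrite -!mulrA coefB !mulrzl !coefMrz.
by rewrite !coef1_parabola_monomial !intrM; ring.
Qed.

Lemma cst_segment_root {R : rcfType} {n} {s t : 'I_n -> int} {x1 y1 x2 y2 : R} :
  cst s t x1 y1 * cst s t x2 y2 < 0 ->
  exists2 v, 0 < v < 1 & cst s t (x1 + (x2 - x1) * v) (y1 + (y2 - y1) * v) = 0.
Proof.
move=> sign_change.
pose line a b : {poly R} := a%:P + (b - a) *: 'X.
have line_horner a b w : (line a b).[w] = a + (b - a) * w.
  by rewrite hornerD hornerC hornerZ hornerX.
have [|v] := @poly_ivtoo _ (cst s t (line x1 x2) (line y1 y2)) 0 1 ler01.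
  by rewrite !cst_horner !line_horner !mulr0 !mulr1 !addr0 ![x1 + _]addrC
    ![y1 + _]addrC !subrK.
by rewrite in_itv rootE cst_horner !line_horner => v01 /eqP; exists v.
Qed.

Lemma in_region_segment {R : realDomainType} {x1 y1 x2 y2 v : R} :
  in_region x1 y1 -> in_region x2 y2 -> 0 < v < 1 ->
  in_region (x1 + (x2 - x1) * v) (y1 + (y2 - y1) * v).
Proof.
move=> [/andP[? ?] /andP[? ?] ?] [/andP[? ?] /andP[? ?] ?] /andP[? ?].
by split; [apply/andP; split.. |]; nra.
Qed.

Theorem proposition3p1 (R : realType) (n : nat) (hn : (3 <= n)%N)
  (s t : 'I_n -> int) (hs : pm1 s) (ht : pm1 t) (hst : s <> t)
  (hsharp : sharp s n = sharp t n)
  (i0 i1 : 'I_n) (hi0 : nat_of_ord i0 = 0%N) (hi1 : nat_of_ord i1 = 1%N)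
  (hs12 : s i0 = 1 /\ s i1 = -1) (ht12 : t i0 = -1 /\ t i1 = 1)
  (hineq : \sum_(i < n) s i * (sharp s i.+1)%:Z
           > \sum_(i < n) t i * (sharp t i.+1)%:Z) :
  exists x y : R, [/\ 0 < x < 1, 0 < y < 1, 1 < x + y & cst s t x y = 0].
Proof.
(* [hn] and [hst] are not needed: the indices i1, i0 already force
   n >= 2 and s i0 <> t i0. *)
have [[si0 si1] [ti0 _]] := (hs12, ht12).
have third_gt0 : (0 : R) < 3^-1 by rewrite invr_gt0.
pose parabola : {poly R} := cst s t (1 - 'X) (1 - 'X ^+ 2).
pose ray : {poly R} := cst s t (1 - 'X) ('X *+ 2).
have parabola0 : parabola.[0] = 0.
  by rewrite cst_horner !hornerE expr0n /= !subr0 cst11.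
have parabola_slope : parabola`_1 < 0.
  by rewrite coef1_cst_parabola oppr_lt0 ltr0z subr_gt0.
have ray0 : 0 < ray.[0].
  by rewrite cst_horner !hornerE subr0 (cst10 hi0 hi1 si0 si1 ti0).
have [u1 /andP[u1_gt0 u1_le] f_neg] :=
  poly_lt0_right _ third_gt0 parabola0 parabola_slope.
have [u2 /andP[u2_gt0 u2_le] f_pos] := poly_gt0_right _ third_gt0 ray0.
move: f_neg f_pos; rewrite !cst_horner !hornerE => f_neg f_pos.
have sign_change : cst s t (1 - u2) (u2 *+ 2) * cst s t (1 - u1) (1 - u1 ^+ 2) < 0.
  by rewrite pmulr_rlt0.
have [v v01 f_v] := cst_segment_root sign_change.
have ray_in : in_region (1 - u2) (u2 *+ 2).
  by split; [apply/andP; split.. |]; lra.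
have parabola_in : in_region (1 - u1) (1 - u1 ^+ 2).
  by split; [apply/andP; split.. |]; nra.
have [x01 y01 xy] := in_region_segment ray_in parabola_in v01.
by exists (1 - u2 + (1 - u1 - (1 - u2)) * v),
  (u2 *+ 2 + (1 - u1 ^+ 2 - u2 *+ 2) * v).
Qed.
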